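(* For every CABA framework $F_c$, $\mathit{GrCInst}(\mathit{CArg})=\mathit{Arg}_c$ modulo ground constraints; that is, every ground constrained instance of a constrained argument of $F_c$ is equal modulo ground constraints to some argument of $\mathit{Ground}(F_c)$, and every argument of $\mathit{Ground}(F_c)$ is equal modulo ground constraints to some ground constrained instance of a constrained argument of $F_c$.
   Context: Conventions. $\mathsf X$: tuple of variables; $\mathsf t$: tuple of terms. A substitution $\vartheta=\{X_1/t_1,\dots,X_n/t_n\}$ maps distinct variables to terms; $e\vartheta$ replaces each $X_i$ by $t_i$; $\{\mathsf X/\mathsf t\}$ maps $\mathsf X$ componentwise to $\mathsf t$. An object is ground if it has no variables; $\vartheta$ is grounding for $e$ if $e\vartheta$ is ground. Theory of constraints. $\mathcal{CT}$ is a first-order theory with equality (identity on its domain, including the Clark Equality Theory) whose atomic formulas form the set $\mathcal C$ of constraints; a finite set $\{c_1,\dots,c_n\}\subseteq\mathcal C$ is consistent if $\mathcal{CT}\models\exists(c_1\wedge\dots\wedge c_n)$. CABA framework $F_c=\langle\mathcal L_c,\mathcal C,\mathcal R,\mathcal{CT},\mathcal A,\overline{\cdot}\rangle$: $\mathcal L_c$ a set of atoms; $\mathcal C\subseteq\mathcal L_c$ the constraints; $\mathcal R$ rules $s_0\leftarrow s_1,\dots,s_m$ ($s_0\in\mathcal L_c\setminus\mathcal C$, $s_i\in\mathcal L_c$) in normalised form $p(\mathsf X_0)\leftarrow C,p_1(\mathsf X_1),\dots,p_m(\mathsf X_m)$ ($C\subseteq\mathcal C$, each $\mathsf X_i$ a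 tuple of distinct variables); $\mathcal A\subseteq\mathcal L_c\setminus\mathcal C$ nonempty assumptions, not heads of rules; $\overline\cdot:\mathcal A\to\mathcal L_c\setminus\mathcal C$ total with $\overline{p(\mathsf t)}=cp(\mathsf t)$ for a fixed predicate $cp$ per assumption predicate $p$; $\mathcal L_c,\mathcal C,\mathcal A$ predicate closed. Constrained arguments. A tight constrained argument $C\cup A\vdash_R s$ (consistent $C\subseteq\mathcal C$, $A\subseteq\mathcal A$, $R\subseteq\mathcal R$, $s\in\mathcal L_c\setminus\mathcal C$) is a finite tree with root $s$, each non-leaf node $p(\mathsf t)$ having as children exactly $s_1\vartheta,\dots,s_m\vartheta$ for exactly one renamed-apart copy $p(\mathsf X)\leftarrow s_1,\dots,s_m$ of a rule of $R$ with $\vartheta=\{\mathsf X/\mathsf t\}$ (or the single child true for a fact), each leaf a constraint of $C$, an assumption of $A$ or true; $C,A,R$ are exactly those occurring/used. A constrained argument is $C\vartheta\cup D\cup A\vartheta\vdash_R s\vartheta$ for some tight $C\cup A\vdash_R s$, substitution $\vartheta$ and $D\subseteq\mathcal C$ with $C\vartheta\cup D$ consistent; a constrained instance of a constrained argument $C\cup A\vdash_R s$ (via $\vartheta$, $D$) is $C\vartheta\cup D\cup A\vartheta\vdash_R s\vartheta$ with $C\vartheta\cup D$ consistent. $\mathit{CArg}$: set of all constrained arguments; $\mathit{GrCInst}(\alpha)$: ground constrained instances of $\alpha$; $\mathit{GrCInst}(\Gamma)=\bigcup_{\alpha\in\Gamma}\mathit{GrCInst}(\alpha)$. ABA and grounding.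 An argument $A\vdash_R s$ of an ABA framework $\langle\mathcal L,\mathcal R,\mathcal A,\overline\cdot\rangle$ is a finite tree with root $s$, each non-leaf node $s'$ having as children exactly the body elements of one rule of $R$ with head $s'$ (or the single child true for a fact), each leaf an assumption in $A$ or true. $\mathit{Ground}(F_c)=\langle\mathcal L_{cg},\mathcal R_g,\mathcal A_g,\overline\cdot\rangle$: $\mathcal L_{cg}$ the ground atoms of $\mathcal L_c$; $\mathcal R_g$ all ground instances of rules of $\mathcal R$ plus the facts $c\leftarrow$ for ground $c\in\mathcal C$ with $\mathcal{CT}\models c$; $\mathcal A_g$ the ground assumptions; contraries inherited. $\mathit{Arg}_c$ is the set of all arguments of $\mathit{Ground}(F_c)$. Equality modulo ground constraints. For ground atoms, $\mathcal{CT}\models p(\mathsf t)\leftrightarrow p(\mathsf t')$ means $\mathcal{CT}\models\mathsf t=\mathsf t'$; for ground sets of atoms $A,A'$, $\mathcal{CT}\models\bigwedge A\leftrightarrow\bigwedge A'$ means every atom of each set is so equivalent to some atom of the other. Two ground arguments with (non-constraint) assumption sets $A,A'$ and claims $s,s'$ are equal modulo ground constraints if $\mathcal{CT}\models\bigwedge A\leftrightarrow\bigwedge A'$ and $\mathcal{CT}\models s\leftrightarrow s'$ (ground constraints in the supports are disregarded). *)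

From Stdlib Require Import List Arith.
Import ListNotations.
Set Implicit Arguments.

Section Syntax.
Variables (Fsym Psym : Type).

(* first-order terms over function symbols Fsym (constants = 0-ary symbols);
   variables are natural numbers *)
Inductive term : Type :=
| Var : nat -> term
| Fn : Fsym -> list term -> term.

Definition atom : Type := (Psym * list term)%type.

Record rule : Type := mkRule { head : atom; body : list atom }.

Fixpoint vars_term (t : term) : list nat :=
  match t with
  | Var x => [x]
  | Fn _ l => flat_map vars_term l
  end.
Definition vars_atom (a : atom) : list nat := flat_map vars_term (snd a).
Definition vars_rule (r : rule) : list nat :=
  vars_atom (head r) ++ flat_map vars_atom (body r).

Definition ground_term (t : term) : Prop := vars_term t = [].
Definition ground_atom (a : atom) : Prop := vars_atom a = [].
Definition ground_rule (r : rule) : Prop := vars_rule r = [].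

Fixpoint tsubstf (s : nat -> term) (t : term) : term :=
  match t with
  | Var x => s x
  | Fn f l => Fn f (map (tsubstf s) l)
  end.
Definition asubstf (s : nat -> term) (a : atom) : atom :=
  (fst a, map (tsubstf s) (snd a)).
Definition rsubstf (s : nat -> term) (r : rule) : rule :=
  mkRule (asubstf s (head r)) (map (asubstf s) (body r)).

Definition subst : Type := list (nat * term).
Definition is_subst (th : subst) : Prop := NoDup (map fst th).
Fixpoint lookup (th : subst) (x : nat) : term :=
  match th with
  | [] => Var x
  | (y, t) :: th' => if Nat.eqb x y then t else lookup th' x
  end.
Definition tsubst (th : subst) := tsubstf (lookup th).
Definition asubst (th : subst) := asubstf (lookup th).
Definition rsubst (th : subst) := rsubstf (lookup th).

Definition rename_rule (rho : nat -> nat) (r : rule) : rule :=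
  rsubstf (fun x => Var (rho x)) r.

Record structure : Type := {
  dom : Type;
  fI : Fsym -> list dom -> dom;
  pI : Psym -> list dom -> Prop }.

Fixpoint eval (M : structure) (v : nat -> dom M) (t : term) : dom M :=
  match t with
  | Var x => v x
  | Fn f l => fI M f (map (eval M v) l)
  end.

Definition sat_atom (M : structure) (v : nat -> dom M) (a : atom) : Prop :=
  pI M (fst a) (map (eval M v) (snd a)).

Inductive formula : Type :=
| FAtom : atom -> formula
| FNot : formula -> formula
| FAnd : formula -> formula -> formula
| FAll : nat -> formula -> formula.

Fixpoint atoms_of (phi : formula) : list atom :=
  match phi with
  | FAtom a => [a]
  | FNot p => atoms_of p
  | FAnd p q => atoms_of p ++ atoms_of q
  | FAll _ p => atoms_of p
  end.

Definition upd (M : structure) (v : nat -> dom M) (x : nat) (d : dom M) :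
  nat -> dom M := fun y => if Nat.eqb y x then d else v y.

Fixpoint sat (M : structure) (v : nat -> dom M) (phi : formula) : Prop :=
  match phi with
  | FAtom a => sat_atom M v a
  | FNot p => ~ sat M v p
  | FAnd p q => sat M v p /\ sat M v q
  | FAll x p => forall d : dom M, sat M (upd M v x d) p
  end.

(* TTrue is the leaf "true"; TLeaf a a leaf labelled a; TNode a n kids a
   non-leaf node labelled a, annotated with n (the rule used) *)
Inductive tree (N : Type) : Type :=
| TTrue : tree N
| TLeaf : atom -> tree N
| TNode : atom -> N -> list (tree N) -> tree N.
Arguments TTrue {N}.
Arguments TLeaf {N}.
Arguments TNode {N}.

Fixpoint subtrees (N : Type) (t : tree N) : list (tree N) :=
  t :: match t with
       | TNode _ _ kids => flat_map (@subtrees N) kids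
       | _ => []
       end.

Definition root (N : Type) (t : tree N) : option atom :=
  match t with
  | TTrue => None
  | TLeaf a => Some a
  | TNode a _ _ => Some a
  end.

Definition leaf_atoms (N : Type) (t : tree N) : list atom :=
  flat_map (fun s => match s with TLeaf a => [a] | _ => [] end) (subtrees t).

Definition annots (N : Type) (t : tree N) : list N :=
  flat_map (fun s => match s with TNode _ n _ => [n] | _ => [] end) (subtrees t).

(* children of a node are exactly the (instantiated) body elements,
   or the single child "true" for a fact *)
Definition kids_match (N : Type) (bd : list atom) (kids : list (tree N)) : Prop :=
  match bd with
  | [] => kids = [TTrue]
  | _ => map (@root N) kids = map Some bd
  end.

End Syntax.

Arguments Var {Fsym}.
Arguments TTrue {Fsym Psym N}.
Arguments TLeaf {Fsym Psym N}.
Arguments TNode {Fsym Psym N}.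

(* L_c, C, A are predicate closed, hence given by sets of predicates. *)
Record caba (Fsym Psym : Type) : Type := {
  Lp : Psym -> Prop;
  Cp : Psym -> Prop;
  eqP : Psym;
  CT : formula Fsym Psym -> Prop;
  Rl : rule Fsym Psym -> Prop;
  Ap : Psym -> Prop;
  ctr : Psym -> Psym
}.

Section CABA.
Variables (Fsym Psym : Type) (F : caba Fsym Psym).

Notation atom := (atom Fsym Psym).
Notation rule := (rule Fsym Psym).
Notation structure := (structure Fsym Psym).

Definition model (M : structure) : Prop :=
  inhabited (dom M) /\
  (forall a b : dom M, pI M (eqP F) [a; b] <-> a = b) /\
  (forall phi, CT F phi -> forall v, sat M v phi).

Definition entails (c : atom) : Prop :=
  forall M, model M -> forall v, sat_atom M v c.

(* a finite set of constraints is consistent: CT |= exists(c1 /\ ... /\ cn) *)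
Definition consistent (cs : list atom) : Prop :=
  forall M, model M -> exists v, forall c, In c cs -> sat_atom M v c.

Definition entails_eq (t t' : term Fsym) : Prop := entails (eqP F, [t; t']).

Definition includes_CET : Prop :=
  forall M, model M ->
    (forall f g (l l' : list (dom M)), fI M f l = fI M g l' -> f = g /\ l = l') /\
    (forall (t : term Fsym) x (v : nat -> dom M),
        t <> Var x -> In x (vars_term t) -> eval M v t <> v x).

Definition normalised (r : rule) : Prop :=
  (exists xs, snd (head r) = map Var xs /\ NoDup xs) /\
  (forall b, In b (body r) ->
     Cp F (fst b) \/ exists xs, snd b = map Var xs /\ NoDup xs).

Definition wf_caba : Prop :=
  (forall p, Cp F p -> Lp F p) /\
  (forall p, Ap F p -> Lp F p /\ ~ Cp F p) /\
  (exists p, Ap F p) /\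
  Cp F (eqP F) /\
  (forall phi a, CT F phi -> In a (atoms_of phi) -> Cp F (fst a)) /\
  includes_CET /\
  (forall r, Rl F r ->
     Lp F (fst (head r)) /\ ~ Cp F (fst (head r)) /\ ~ Ap F (fst (head r)) /\
     (forall b, In b (body r) -> Lp F (fst b)) /\
     normalised r) /\
  (forall p, Ap F p -> Lp F (ctr F p) /\ ~ Cp F (ctr F p)).

(* each node is annotated with the rule of R used and the renaming giving the
   renamed-apart copy *)
Definition tnode := (rule * (nat -> nat))%type.

Definition tight_local (t : tree Fsym Psym tnode) : Prop :=
  match t with
  | TTrue => True
  | TLeaf a => Cp F (fst a) \/ Ap F (fst a)
  | TNode a (r, rho) kids =>
      Rl F r /\ (forall x y, rho x = rho y -> x = y) /\
      let rr := rename_rule rho r in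
      exists xs, snd (head rr) = map Var xs /\
        fst (head rr) = fst a /\ length xs = length (snd a) /\
        kids_match (map (asubst (combine xs (snd a))) (body rr)) kids
  end.

Definition renamed_apart (t : tree Fsym Psym tnode) (s : atom) : Prop :=
  let cps := map (fun n => rename_rule (snd n) (fst n)) (annots t) in
  ForallOrdPairs (fun r1 r2 => forall x, In x (vars_rule r1) -> ~ In x (vars_rule r2)) cps /\
  (forall r x, In r cps -> In x (vars_rule r) -> ~ In x (vars_atom s)).

Record carg : Type := mkCarg {
  ca_cs : list atom; ca_as : list atom; ca_rs : list rule; ca_claim : atom }.

Definition is_tight (t : tree Fsym Psym tnode) (al : carg) : Prop :=
  root t = Some (ca_claim al) /\
  Lp F (fst (ca_claim al)) /\ ~ Cp F (fst (ca_claim al)) /\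
  (forall s, In s (subtrees t) -> tight_local s) /\
  renamed_apart t (ca_claim al) /\
  (forall c, In c (ca_cs al) <-> In c (leaf_atoms t) /\ Cp F (fst c)) /\
  (forall a, In a (ca_as al) <-> In a (leaf_atoms t) /\ Ap F (fst a)) /\
  (forall r, In r (ca_rs al) <-> exists rho, In (r, rho) (annots t)) /\
  consistent (ca_cs al).

Definition tight_carg (al : carg) : Prop := exists t, is_tight t al.

Definition cinstance (al be : carg) : Prop :=
  exists (th : subst Fsym) (D : list atom),
    is_subst th /\ (forall d, In d D -> Cp F (fst d)) /\
    consistent (map (asubst th) (ca_cs al) ++ D) /\
    be = mkCarg (map (asubst th) (ca_cs al) ++ D) (map (asubst th) (ca_as al))
                (ca_rs al) (asubst th (ca_claim al)).

Definition CArg (be : carg) : Prop :=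
  exists al, tight_carg al /\ cinstance al be.

Definition ground_carg (be : carg) : Prop :=
  (forall c, In c (ca_cs be) -> ground_atom c) /\
  (forall a, In a (ca_as be) -> ground_atom a) /\
  ground_atom (ca_claim be).

Definition GrCInst_CArg (be : carg) : Prop :=
  exists al, CArg al /\ cinstance al be /\ ground_carg be.

Definition ground_rules (rg : rule) : Prop :=
  (exists r (sg : subst Fsym), Rl F r /\ is_subst sg /\ rg = rsubst sg r /\ ground_rule rg)
  \/ (exists c, Cp F (fst c) /\ ground_atom c /\ entails c /\ rg = mkRule c []).

Definition ground_local (t : tree Fsym Psym rule) : Prop :=
  match t with
  | TTrue => True
  | TLeaf a => Ap F (fst a) /\ ground_atom a
  | TNode a rg kids => ground_rules rg /\ head rg = a /\ kids_match (body rg) kids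
  end.

Record garg : Type := mkGarg { ga_as : list atom; ga_rs : list rule; ga_claim : atom }.

Definition Arg_c (ga : garg) : Prop :=
  exists t : tree Fsym Psym rule,
    root t = Some (ga_claim ga) /\
    (forall s, In s (subtrees t) -> ground_local s) /\
    (forall a, In a (ga_as ga) <-> In a (leaf_atoms t)) /\
    (forall r, In r (ga_rs ga) <-> In r (annots t)).

(* CT |= p(t) <-> p(t')  for ground atoms *)
Definition atom_equiv (a a' : atom) : Prop :=
  fst a = fst a' /\ length (snd a) = length (snd a') /\
  Forall2 entails_eq (snd a) (snd a').

Definition set_equiv (A A' : list atom) : Prop :=
  (forall a, In a A -> exists a', In a' A' /\ atom_equiv a a') /\
  (forall a', In a' A' -> exists a, In a A /\ atom_equiv a a').

Definition eq_mod_gc (be : carg) (ga : garg) : Prop :=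
  set_equiv (ca_as be) (ga_as ga) /\ atom_equiv (ca_claim be) (ga_claim ga).

End CABA.

(* Both inclusions are proved by transforming argument trees node by node.

   A ground constrained instance of a tight argument becomes an argument of Ground(F_c) by
   composing the two instantiating substitutions, grounding the variables they leave free
   with a fixed ground term, and instantiating the renamed rule copy of every node
   accordingly.  A constraint leaf becomes the fact [c <-] of Ground(F_c): it is a ground
   member of a consistent set of constraints, hence entailed by CT.

   Conversely, an argument of Ground(F_c) is rebuilt as a tight argument by choosing, for each
   rule node, a rule of R of which the node's rule is an instance, renamed apart by an
   injective coding of the node's path, and by turning each constraint fact into a
   constraint leaf.  The chosen instantiations glue into a single substitution, under which
   the tight argument has exactly the assumptions and the (ground) claim of the given one. *)

From Pilot Require Import Defs.
From Stdlib Require Import List Arith Lia FinFun ClassicalEpsilon Cantor.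
Import ListNotations.
Set Implicit Arguments.

Lemma flat_map_flat_map A B C (f : B -> list C) (g : A -> list B) l :
  flat_map f (flat_map g l) = flat_map (fun x => flat_map f (g x)) l.
Proof. induction l; simpl; auto. rewrite flat_map_app. f_equal; auto. Qed.

Fixpoint imap A B (f : nat -> A -> B) (i : nat) (l : list A) : list B :=
  match l with
  | [] => []
  | x :: l' => f i x :: imap f (S i) l'
  end.

(* Runs over [lb]; elements missing from [la] are read as [d]. *)
Fixpoint imap2 A B C (f : nat -> A -> B -> C) (d : A) (i : nat) (la : list A) (lb : list B) :
  list C :=
  match lb with
  | [] => []
  | b :: lb' => f i (hd d la) b :: imap2 f d (S i) (tl la) lb'
  end.

Lemma ForallOrdPairs_map_keyed A B K (R : B -> B -> Prop) (h : A -> B) (key : A -> K) L :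
  NoDup (map key L) -> (forall x y, In x L -> In y L -> key x <> key y -> R (h x) (h y)) ->
  ForallOrdPairs R (map h L).
Proof.
  induction L as [| x L IH]; simpl; intros Hnd HR; constructor.
  - apply Forall_forall. intros b Hb. apply in_map_iff in Hb as [y [<- Hy]].
    inversion Hnd as [| ? ? Hx _]. apply HR; auto.
    intros E. apply Hx. rewrite E. apply in_map, Hy.
  - inversion Hnd. apply IH; auto.
Qed.

(** * Substitutions *)

Section Terms.
Variable Fsym : Type.
Implicit Types (t : term Fsym) (s : nat -> term Fsym).

Fixpoint term_nested_ind (P : term Fsym -> Prop) (HV : forall x, P (Var x))
  (HF : forall f l, Forall P l -> P (Fn f l)) t : P t :=
  match t with
  | Var x => HV x
  | Fn f l =>
      HF f l ((fix go l : Forall P l :=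
                 match l with
                 | [] => Forall_nil _
                 | u :: l' => Forall_cons u (@term_nested_ind P HV HF u) (go l')
                 end) l)
  end.

Lemma tsubstf_comp s1 s2 t :
  tsubstf s1 (tsubstf s2 t) = tsubstf (fun x => tsubstf s1 (s2 x)) t.
Proof.
  induction t as [x | f l IH] using term_nested_ind; simpl; [reflexivity|].
  f_equal. rewrite map_map. apply map_ext_Forall, IH.
Qed.

Lemma tsubstf_ext s1 s2 t :
  (forall x, In x (vars_term t) -> s1 x = s2 x) -> tsubstf s1 t = tsubstf s2 t.
Proof.
  induction t as [x | f l IH] using term_nested_ind; simpl; intros Hx.
  - auto.
  - f_equal. apply map_ext_in. intros u Hu. rewrite Forall_forall in IH.
    apply IH; auto. intros x Hxu. apply Hx, in_flat_map. eauto.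
Qed.

Lemma tsubstf_Var t : tsubstf (@Var _) t = t.
Proof.
  induction t as [x | f l IH] using term_nested_ind; simpl; [reflexivity|].
  f_equal. rewrite <- (map_id l) at 2. apply map_ext_Forall, IH.
Qed.

Lemma vars_tsubstf s t z :
  In z (vars_term (tsubstf s t)) -> exists x, In x (vars_term t) /\ In z (vars_term (s x)).
Proof.
  induction t as [x | f l IH] using term_nested_ind; simpl; intros Hz.
  - eauto.
  - apply in_flat_map in Hz as [u [Hu Hz]]. apply in_map_iff in Hu as [w [<- Hw]].
    rewrite Forall_forall in IH. destruct (IH w Hw Hz) as [x [Hx Hzx]].
    exists x. split; auto. apply in_flat_map. eauto.
Qed.

Lemma ground_tsubstf s t :
  (forall x, In x (vars_term t) -> ground_term (s x)) -> ground_term (tsubstf s t).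
Proof.
  intros Hs. apply incl_l_nil. intros z Hz.
  apply vars_tsubstf in Hz as [x [Hx Hzx]]. unfold ground_term in Hs. rewrite (Hs x Hx) in Hzx.
  exact Hzx.
Qed.

End Terms.

Section Atoms.
Variables Fsym Psym : Type.
Implicit Types (a b c : atom Fsym Psym) (r : rule Fsym Psym) (s : nat -> term Fsym).

Lemma asubstf_comp s1 s2 a :
  asubstf s1 (asubstf s2 a) = asubstf (fun x => tsubstf s1 (s2 x)) a.
Proof.
  unfold asubstf; simpl. f_equal. rewrite map_map. apply map_ext. intros; apply tsubstf_comp.
Qed.

Lemma asubstf_ext s1 s2 a :
  (forall x, In x (vars_atom a) -> s1 x = s2 x) -> asubstf s1 a = asubstf s2 a.
Proof.
  intros H. unfold asubstf. f_equal. apply map_ext_in. intros u Hu. apply tsubstf_ext.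
  intros x Hx. apply H, in_flat_map. eauto.
Qed.

Lemma asubstf_Var a : asubstf (@Var _) a = a.
Proof.
  destruct a as [p l]. unfold asubstf; simpl. f_equal.
  rewrite <- (map_id l) at 2. apply map_ext, tsubstf_Var.
Qed.

Lemma asubstf_ground s a : ground_atom a -> asubstf s a = a.
Proof.
  intros Hg. rewrite <- (asubstf_Var a) at 2. apply asubstf_ext.
  unfold ground_atom in Hg. rewrite Hg. contradiction.
Qed.

Lemma vars_asubstf s a z :
  In z (vars_atom (asubstf s a)) -> exists x, In x (vars_atom a) /\ In z (vars_term (s x)).
Proof.
  unfold vars_atom, asubstf; simpl. intros Hz.
  apply in_flat_map in Hz as [u [Hu Hz]]. apply in_map_iff in Hu as [w [<- Hw]].
  apply vars_tsubstf in Hz as [x [Hx Hzx]].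
  exists x. split; auto. apply in_flat_map. eauto.
Qed.

Lemma ground_asubstf s a :
  (forall x, In x (vars_atom a) -> ground_term (s x)) -> ground_atom (asubstf s a).
Proof.
  intros Hs. apply incl_l_nil. intros z Hz.
  apply vars_asubstf in Hz as [x [Hx Hzx]]. unfold ground_term in Hs. rewrite (Hs x Hx) in Hzx.
  exact Hzx.
Qed.

Lemma asubstf_ground_instance g s a :
  ground_atom (asubstf s a) -> asubstf (fun x => tsubstf g (s x)) a = asubstf s a.
Proof. intros Hg. rewrite <- asubstf_comp. apply asubstf_ground, Hg. Qed.

Lemma rsubstf_comp s1 s2 r :
  rsubstf s1 (rsubstf s2 r) = rsubstf (fun x => tsubstf s1 (s2 x)) r.
Proof.
  unfold rsubstf; simpl. rewrite asubstf_comp, map_map. f_equal.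
  apply map_ext. intros; apply asubstf_comp.
Qed.

Lemma in_vars_rule_head r y : In y (vars_atom (Defs.head r)) -> In y (vars_rule r).
Proof. intros; apply in_or_app; auto. Qed.

Lemma in_vars_rule_body r b y : In b (body r) -> In y (vars_atom b) -> In y (vars_rule r).
Proof. intros; apply in_or_app; right; apply in_flat_map; eauto. Qed.

Lemma rsubstf_ext s1 s2 r :
  (forall x, In x (vars_rule r) -> s1 x = s2 x) -> rsubstf s1 r = rsubstf s2 r.
Proof.
  intros H. unfold rsubstf. f_equal.
  - apply asubstf_ext. intros x Hx. apply H, in_vars_rule_head, Hx.
  - apply map_ext_in. intros b Hb. apply asubstf_ext. intros x Hx.
    apply H. eapply in_vars_rule_body; eauto.
Qed.

Lemma ground_rsubstf s r :
  (forall x, In x (vars_rule r) -> ground_term (s x)) -> ground_rule (rsubstf s r).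
Proof.
  intros Hs. apply incl_l_nil. intros z Hz. unfold rsubstf, vars_rule in Hz; simpl in Hz.
  apply in_app_iff in Hz as [Hz | Hz].
  - rewrite ground_asubstf in Hz; [contradiction|].
    intros x Hx. apply Hs, in_vars_rule_head, Hx.
  - apply in_flat_map in Hz as [b' [Hb' Hz]]. apply in_map_iff in Hb' as [b [<- Hb]].
    rewrite ground_asubstf in Hz; [contradiction|].
    intros x Hx. apply Hs. eapply in_vars_rule_body; eauto.
Qed.

Lemma vars_rename_rule rho r x :
  In x (vars_rule (rename_rule rho r)) -> exists y, x = rho y.
Proof.
  unfold rename_rule, rsubstf, vars_rule; simpl. intros Hx.
  apply in_app_iff in Hx as [Hx | Hx].
  - apply vars_asubstf in Hx as [y [_ [<- | []]]]. eauto.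
  - apply in_flat_map in Hx as [b' [Hb' Hx]]. apply in_map_iff in Hb' as [b [<- _]].
    apply vars_asubstf in Hx as [y [_ [<- | []]]]. eauto.
Qed.

Lemma eval_tsubstf (M : structure Fsym Psym) v s t :
  eval M v (tsubstf s t) = eval M (fun x => eval M v (s x)) t.
Proof.
  induction t as [x | f l IH] using term_nested_ind; simpl; [reflexivity|].
  f_equal. rewrite map_map. apply map_ext_Forall, IH.
Qed.

Lemma eval_ground (M : structure Fsym Psym) v v' t :
  ground_term t -> eval M v t = eval M v' t.
Proof.
  unfold ground_term.
  induction t as [x | f l IH] using term_nested_ind; simpl; intros Hg; [discriminate|].
  f_equal. apply map_ext_in. intros u Hu. rewrite Forall_forall in IH.
  apply IH; auto. apply incl_l_nil. intros z Hz. rewrite <- Hg. apply in_flat_map. eauto.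
Qed.

Lemma sat_asubstf (M : structure Fsym Psym) v s a :
  sat_atom M v (asubstf s a) <-> sat_atom M (fun x => eval M v (s x)) a.
Proof.
  unfold sat_atom, asubstf; simpl. rewrite map_map.
  erewrite map_ext; [reflexivity|]. intros; apply eval_tsubstf.
Qed.

Lemma sat_ground (M : structure Fsym Psym) v v' a :
  ground_atom a -> sat_atom M v a -> sat_atom M v' a.
Proof.
  unfold sat_atom. intros Hg H. erewrite map_ext_in; [exact H|].
  intros u Hu. apply eval_ground, incl_l_nil. intros z Hz.
  unfold ground_atom, vars_atom in Hg. rewrite <- Hg. apply in_flat_map. eauto.
Qed.

End Atoms.

Section Substitutions.
Variable Fsym : Type.
Implicit Types (th : subst Fsym) (f : nat -> term Fsym).

Lemma lookup_In th x t : is_subst th -> In (x, t) th -> lookup th x = t.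
Proof.
  unfold is_subst.
  induction th as [|[y u] th IH]; simpl; intros Hnd Hin; [contradiction|].
  inversion Hnd as [|? ? Hy Hnd']; subst. destruct Hin as [Heq | Hin].
  - injection Heq as -> ->. rewrite Nat.eqb_refl. reflexivity.
  - destruct (Nat.eqb_spec x y) as [-> | _]; auto.
    exfalso. apply Hy, in_map_iff. exists (y, t). auto.
Qed.

Lemma lookup_combine xs (l : list (term Fsym)) :
  NoDup xs -> length xs = length l -> map (lookup (combine xs l)) xs = l.
Proof.
  revert l; induction xs as [|x xs IH]; intros [|t l] Hnd Hl; simpl in *;
    try discriminate; auto.
  inversion Hnd as [|? ? Hx Hnd']; subst. rewrite Nat.eqb_refl. f_equal.
  transitivity (map (lookup (combine xs l)) xs); [|apply IH; auto].
  apply map_ext_in. intros y Hy.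
  destruct (Nat.eqb_spec y x) as [-> | _]; [contradiction | reflexivity].
Qed.

Lemma lookup_combine_notin xs (l : list (term Fsym)) x :
  ~ In x xs -> lookup (combine xs l) x = Var x.
Proof.
  revert l; induction xs as [|y xs IH]; intros [|t l] H; simpl; auto.
  destruct (Nat.eqb_spec x y) as [-> | _].
  - exfalso. apply H. left. reflexivity.
  - apply IH. intros Hx. apply H. right. exact Hx.
Qed.

Definition subst_on (V : list nat) f : subst Fsym :=
  map (fun x => (x, f x)) (nodup Nat.eq_dec V).

Lemma is_subst_subst_on V f : is_subst (subst_on V f).
Proof.
  unfold is_subst, subst_on. rewrite map_map, map_id. apply NoDup_nodup.
Qed.

Lemma lookup_subst_on V f x : In x V -> lookup (subst_on V f) x = f x.
Proof.
  intros Hx. apply lookup_In; [apply is_subst_subst_on|].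
  apply in_map_iff. exists x. split; auto. apply nodup_In, Hx.
Qed.

Lemma rsubst_subst_on Psym f (r : rule Fsym Psym) :
  rsubst (subst_on (vars_rule r) f) r = rsubstf f r.
Proof. apply rsubstf_ext. intros x Hx. apply lookup_subst_on, Hx. Qed.

End Substitutions.

(** * Argument trees *)

Section Trees.
Variables Fsym Psym N : Type.
Implicit Types (t k : tree Fsym Psym N) (kids : list (tree Fsym Psym N)).
Implicit Types (a : atom Fsym Psym) (n : N).

Fixpoint tree_nested_ind (P : tree Fsym Psym N -> Prop) (HT : P TTrue)
  (HL : forall a, P (TLeaf a))
  (HN : forall a n kids, Forall P kids -> P (TNode a n kids)) t : P t :=
  match t with
  | TTrue => HT
  | TLeaf a => HL a
  | TNode a n kids =>
      HN a n kids ((fix go l : Forall P l :=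
                      match l with
                      | [] => Forall_nil _
                      | u :: l' => Forall_cons u (@tree_nested_ind P HT HL HN u) (go l')
                      end) kids)
  end.

Lemma leaf_atoms_node a n kids :
  leaf_atoms (TNode a n kids) = flat_map (@leaf_atoms _ _ _) kids.
Proof. unfold leaf_atoms. simpl. rewrite flat_map_flat_map. reflexivity. Qed.

Lemma annots_node a n kids :
  annots (TNode a n kids) = n :: flat_map (@annots _ _ _) kids.
Proof. unfold annots. simpl. rewrite flat_map_flat_map. reflexivity. Qed.

Lemma subtrees_node_forall (P : tree Fsym Psym N -> Prop) a n kids :
  (forall s, In s (subtrees (TNode a n kids)) -> P s) <->
  P (TNode a n kids) /\ (forall k, In k kids -> forall s, In s (subtrees k) -> P s).
Proof.
  simpl. split.
  - intros H. split; [apply H; left; reflexivity|].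
    intros k Hk s Hs. apply H. right. apply in_flat_map. eauto.
  - intros [Hroot Hkids] s [<- | Hs]; [exact Hroot|].
    apply in_flat_map in Hs as [k [Hk Hs]]. eauto.
Qed.

Lemma in_subtrees_self t : In t (subtrees t).
Proof. destruct t; left; reflexivity. Qed.

Lemma leaf_in_subtrees t a : In a (leaf_atoms t) -> In (TLeaf a) (subtrees t).
Proof.
  unfold leaf_atoms. intros H. apply in_flat_map in H as [s [Hs H]].
  destruct s as [| b |]; simpl in H; try contradiction.
  destruct H as [<- | []]. exact Hs.
Qed.

Lemma kids_match_map N' (f : atom Fsym Psym -> atom Fsym Psym)
  (h : tree Fsym Psym N -> tree Fsym Psym N') bd kids :
  h TTrue = TTrue -> (forall k, In k kids -> root (h k) = option_map f (root k)) ->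
  kids_match bd kids -> kids_match (map f bd) (map h kids).
Proof.
  intros HT Hroot Hkm. destruct bd as [| b bd]; simpl in *.
  - subst kids. simpl. rewrite HT. reflexivity.
  - rewrite map_map, (map_ext_in _ _ _ Hroot), <- map_map, Hkm. simpl.
    rewrite !map_map. reflexivity.
Qed.

End Trees.

Section NodeRules.
Variables Fsym Psym : Type.
Implicit Types (a h : atom Fsym Psym) (r : rule Fsym Psym) (rho : nat -> nat).

(* Arguments that are not variables, which normalised heads do not have, are read as 0. *)
Definition head_vars h : list nat :=
  map (fun t => match t with Var x => x | _ => 0 end) (snd h).

Lemma head_vars_spec h xs : snd h = map Var xs -> head_vars h = xs.
Proof. intros H. unfold head_vars. rewrite H, map_map. apply map_id. Qed.

Definition node_theta a (rr : rule Fsym Psym) : subst Fsym :=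
  combine (head_vars (Defs.head rr)) (snd a).

(* The rule copy used at a tight node labelled [a]: the renamed rule with its head variables
   instantiated by the arguments of [a], so that its body lists the labels of the children. *)
Definition node_rule a r rho : rule Fsym Psym :=
  rsubst (node_theta a (rename_rule rho r)) (rename_rule rho r).

Lemma node_rule_eq a r rho :
  node_rule a r rho = rsubstf (fun y => lookup (node_theta a (rename_rule rho r)) (rho y)) r.
Proof. unfold node_rule, rsubst, rename_rule. rewrite rsubstf_comp. reflexivity. Qed.

Lemma head_rename_rule r rho ys :
  snd (Defs.head r) = map Var ys -> snd (Defs.head (rename_rule rho r)) = map Var (map rho ys).
Proof.
  intros Hys. unfold rename_rule, rsubstf, asubstf. simpl. rewrite Hys, !map_map. reflexivity.
Qed.

Lemma node_theta_rename a r rho ys :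
  snd (Defs.head r) = map Var ys ->
  node_theta a (rename_rule rho r) = combine (map rho ys) (snd a).
Proof. intros Hys. unfold node_theta. f_equal. apply head_vars_spec, head_rename_rule, Hys. Qed.

Lemma node_rule_head a r rho ys :
  snd (Defs.head r) = map Var ys -> NoDup ys -> Injective rho ->
  fst (Defs.head r) = fst a -> length ys = length (snd a) ->
  Defs.head (node_rule a r rho) = a.
Proof.
  intros Hys Hnd Hinj Hfst Hlen. unfold node_rule.
  rewrite (node_theta_rename a r rho ys Hys). destruct a as [p l]. simpl in *.
  unfold rsubst, rsubstf, asubstf. simpl. f_equal; [exact Hfst|].
  rewrite Hys, !map_map. simpl. rewrite <- (map_map rho).
  apply lookup_combine; [apply Injective_map_NoDup; auto | rewrite length_map; exact Hlen].
Qed.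

Lemma node_rule_instance a r rho ys (th s : nat -> term Fsym) :
  snd (Defs.head r) = map Var ys -> NoDup ys -> Injective rho ->
  asubstf th a = asubstf s (Defs.head r) ->
  (forall y, In y (vars_rule r) -> th (rho y) = s y) ->
  rsubstf th (node_rule a r rho) = rsubstf s r.
Proof.
  intros Hys Hnd Hinj Hla Hth.
  rewrite node_rule_eq, (node_theta_rename a r rho ys Hys), rsubstf_comp.
  apply rsubstf_ext. intros y Hy.
  (* head variables reach [th] through the label [a], the others directly *)
  destruct (in_dec Nat.eq_dec y ys) as [Hin | Hnin].
  - injection Hla as _ Hargs. rewrite Hys, map_map in Hargs. simpl in Hargs.
    assert (Hlen : length (map rho ys) = length (snd a)).
    { rewrite <- (length_map (tsubstf th) (snd a)), Hargs, !length_map. reflexivity. }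
    clear Hy. revert y Hin. apply ext_in_map.
    rewrite <- (map_map rho (fun x => tsubstf th (lookup _ x))), <- map_map, lookup_combine.
    + exact Hargs.
    + apply Injective_map_NoDup; assumption.
    + exact Hlen.
  - rewrite lookup_combine_notin; [apply Hth, Hy|].
    intros Hr. apply in_map_iff in Hr as [z [Hz Hz']]. apply Hinj in Hz. subst. contradiction.
Qed.

End NodeRules.

Section CABA.
Variables (Fsym Psym : Type) (F : caba Fsym Psym).
Hypothesis wf : wf_caba F.
Implicit Types (a b c : atom Fsym Psym) (r : rule Fsym Psym) (p : Psym).

Lemma atom_equiv_refl a : atom_equiv F a a.
Proof.
  split; [reflexivity | split; [reflexivity|]].
  induction (snd a) as [| t l IH]; constructor; [|exact IH].
  intros M [_ [Heq _]] v. apply Heq. reflexivity.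
Qed.

Lemma set_equiv_of_same_elements (A A' : list (atom Fsym Psym)) :
  (forall a, In a A <-> In a A') -> set_equiv F A A'.
Proof.
  intros H. split.
  - intros a Ha. exists a. split; [apply H, Ha | apply atom_equiv_refl].
  - intros a Ha. exists a. split; [apply H, Ha | apply atom_equiv_refl].
Qed.

Lemma entails_of_consistent_ground cs c :
  consistent F cs -> In c cs -> ground_atom c -> entails F c.
Proof.
  intros Hcons Hc Hg M HM v. destruct (Hcons M HM) as [v' Hv'].
  apply sat_ground with v'; auto.
Qed.

Lemma consistent_of_entailed_instances (s : nat -> term Fsym) cs :
  (forall c, In c cs -> entails F (asubstf s c)) -> consistent F cs.
Proof.
  intros H M HM. destruct (proj1 HM) as [d].
  exists (fun x => eval M (fun _ => d) (s x)). intros c Hc. apply sat_asubstf, H; assumption.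
Qed.

Lemma assumption_not_constraint p : Ap F p -> ~ Cp F p.
Proof. destruct wf as [_ [HAp _]]. apply HAp. Qed.

Lemma assumption_in_language p : Ap F p -> Lp F p.
Proof. destruct wf as [_ [HAp _]]. apply HAp. Qed.

Lemma rule_head_in_language r : Rl F r -> Lp F (fst (Defs.head r)).
Proof. intros Hr. destruct wf as [_ [_ [_ [_ [_ [_ [HRl _]]]]]]]. apply HRl, Hr. Qed.

Lemma rule_head_not_constraint r : Rl F r -> ~ Cp F (fst (Defs.head r)).
Proof. intros Hr. destruct wf as [_ [_ [_ [_ [_ [_ [HRl _]]]]]]]. apply HRl, Hr. Qed.

Lemma rule_head_vars r :
  Rl F r -> exists ys, snd (Defs.head r) = map Var ys /\ NoDup ys.
Proof. intros Hr. destruct wf as [_ [_ [_ [_ [_ [_ [HRl _]]]]]]]. apply HRl, Hr. Qed.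

Lemma tight_local_node a r rho kids :
  tight_local F (TNode a (r, rho) kids) <->
  Rl F r /\ Injective rho /\ fst (Defs.head r) = fst a /\
  length (snd (Defs.head r)) = length (snd a) /\ kids_match (body (node_rule a r rho)) kids.
Proof.
  simpl. split.
  - intros [Hr [Hinj [xs [Hxs [Hfst [Hlen Hkm]]]]]]. repeat split; auto.
    + rewrite <- Hlen, <- (length_map (@Var Fsym)), <- Hxs. apply eq_sym, length_map.
    + unfold node_rule, node_theta.
      rewrite (head_vars_spec (Defs.head (rename_rule rho r)) xs Hxs). exact Hkm.
  - intros [Hr [Hinj [Hfst [Hlen Hkm]]]]. destruct (rule_head_vars _ Hr) as [ys [Hys _]].
    repeat split; auto. exists (map rho ys). repeat split.
    + apply head_rename_rule, Hys.
    + exact Hfst.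
    + rewrite length_map, <- Hlen, Hys, length_map. reflexivity.
    + unfold node_rule in Hkm. rewrite (node_theta_rename a r rho ys Hys) in Hkm. exact Hkm.
Qed.

(** * Ground constrained instances are arguments of Ground(F_c) *)

Lemma tight_leaf_assumption t b :
  (forall s, In s (subtrees t) -> tight_local F s) -> In b (leaf_atoms t) ->
  Ap F (fst b) <-> ~ Cp F (fst b).
Proof.
  intros Ht Hb. apply leaf_in_subtrees, Ht in Hb. simpl in Hb.
  split; [apply assumption_not_constraint | tauto].
Qed.

Definition ground_tree (G : nat -> term Fsym) :
  tree Fsym Psym (tnode Fsym Psym) -> tree Fsym Psym (rule Fsym Psym) :=
  fix gt t :=
    match t with
    | TTrue => TTrue
    | TLeaf a =>
        if excluded_middle_informative (Cp F (fst a))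
        then TNode (asubstf G a) (mkRule (asubstf G a) []) [TTrue]
        else TLeaf (asubstf G a)
    | TNode a (r, rho) kids => TNode (asubstf G a) (rsubstf G (node_rule a r rho)) (map gt kids)
    end.

Lemma ground_tree_root G t : root (ground_tree G t) = option_map (asubstf G) (root t).
Proof.
  destruct t as [| a | a [r rho] kids]; simpl; auto.
  destruct (excluded_middle_informative _); reflexivity.
Qed.

Lemma ground_tree_leaves G t a :
  In a (leaf_atoms (ground_tree G t)) <->
  exists b, In b (leaf_atoms t) /\ ~ Cp F (fst b) /\ a = asubstf G b.
Proof.
  induction t as [| b | b [r rho] kids IH] using tree_nested_ind; simpl.
  - split; [contradiction | intros [b [[] _]]].
  - destruct (excluded_middle_informative (Cp F (fst b))) as [HC | HC].
    + rewrite leaf_atoms_node. cbn. split; [contradiction|].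
      intros [b' [[<- | []] [HnC _]]]. contradiction.
    + cbn. split.
      * intros [<- | []]. eauto.
      * intros [b' [[<- | []] [_ ->]]]. auto.
  - rewrite !leaf_atoms_node, in_flat_map. rewrite Forall_forall in IH. split.
    + intros [k' [Hk' Ha]]. apply in_map_iff in Hk' as [k [<- Hk]].
      apply IH in Ha as [b' [Hb' Hb'']]; [|exact Hk].
      exists b'. split; [apply in_flat_map; eauto | exact Hb''].
    + intros [b' [Hb' Hb'']]. apply in_flat_map in Hb' as [k [Hk Hb']].
      exists (ground_tree G k). split; [apply in_map, Hk|]. apply IH; eauto.
Qed.

Lemma ground_local_node G a r rho kids :
  (forall x, ground_term (G x)) -> tight_local F (TNode a (r, rho) kids) ->
  ground_local F (TNode (asubstf G a) (rsubstf G (node_rule a r rho)) (map (ground_tree G) kids)).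
Proof.
  intros HG Hnode. apply tight_local_node in Hnode as [Hr [Hinj [Hfst [Hlen Hkm]]]].
  destruct (rule_head_vars _ Hr) as [ys [Hys Hnd]].
  split; [|split].
  - left. rewrite node_rule_eq, rsubstf_comp.
    eexists r, (subst_on (vars_rule r) _). rewrite rsubst_subst_on.
    repeat split; [exact Hr | apply is_subst_subst_on |].
    apply ground_rsubstf. intros. apply ground_tsubstf. auto.
  - change (asubstf G (Defs.head (node_rule a r rho)) = asubstf G a).
    rewrite node_rule_head with (ys := ys); auto.
    rewrite Hys, length_map in Hlen. exact Hlen.
  - apply kids_match_map; [reflexivity | intros; apply ground_tree_root | exact Hkm].
Qed.

Lemma ground_tree_local G t :
  (forall x, ground_term (G x)) ->
  (forall s, In s (subtrees t) -> tight_local F s) ->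
  (forall c, In c (leaf_atoms t) -> Cp F (fst c) -> entails F (asubstf G c)) ->
  forall s, In s (subtrees (ground_tree G t)) -> ground_local F s.
Proof.
  intros HG. induction t as [| a | a [r rho] kids IH] using tree_nested_ind; intros Ht Hc.
  - intros s [<- | []]. exact I.
  - simpl. destruct (excluded_middle_informative (Cp F (fst a))) as [HC | HC].
    + intros s [<- | [<- | []]]; [|exact I]. simpl. split; [|split; reflexivity].
      right. exists (asubstf G a). repeat split; auto.
      * apply ground_asubstf. auto.
      * apply Hc; [left; reflexivity | exact HC].
    + intros s [<- | []]. split; [|apply ground_asubstf; auto].
      specialize (Ht (TLeaf a) (or_introl eq_refl)). simpl in Ht. tauto.
  - apply subtrees_node_forall in Ht as [Hnode Hkids].
    apply subtrees_node_forall. split; [apply ground_local_node; auto|].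
    intros k' Hk'. apply in_map_iff in Hk' as [k [<- Hk]]. rewrite Forall_forall in IH.
    apply IH; [exact Hk | apply Hkids, Hk |].
    intros c Hck. apply Hc. rewrite leaf_atoms_node. apply in_flat_map. eauto.
Qed.

Lemma ground_instance_is_argument :
  (exists t : term Fsym, ground_term t) ->
  forall be, GrCInst_CArg F be -> exists ga, Arg_c F ga /\ eq_mod_gc F be ga.
Proof.
  intros [t0 Ht0] be [al [[al0 [[T HT] Hal]] [Hbe Hground]]].
  destruct Hal as [th1 [D1 [_ [_ [_ ->]]]]].
  destruct Hbe as [th2 [D2 [_ [_ [Hcons ->]]]]].
  destruct HT as [Hroot [_ [_ [Htight [_ [Hcs [Has _]]]]]]].
  destruct Hground as [Hgcs [Hgas Hgclaim]]. simpl in *.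
  set (s := fun x => tsubst th2 (lookup th1 x)).
  set (G := fun x => tsubstf (fun _ => t0) (s x)).
  assert (HG : forall x, ground_term (G x)).
  { intros x. apply ground_tsubstf. intros. exact Ht0. }
  assert (HGs : forall c, ground_atom (asubst th2 (asubst th1 c)) ->
                          asubstf G c = asubst th2 (asubst th1 c)).
  { intros c Hc. unfold asubst in *. rewrite asubstf_comp in *.
    apply asubstf_ground_instance, Hc. }
  assert (Hentails : forall c, In c (leaf_atoms T) -> Cp F (fst c) -> entails F (asubstf G c)).
  { intros c Hc HC.
    assert (Hin : In (asubst th2 (asubst th1 c))
                     (map (asubst th2) (map (asubst th1) (ca_cs al0) ++ D1) ++ D2)).
    { apply in_or_app. left. apply in_map, in_or_app. left. apply in_map, Hcs. auto. }
    rewrite HGs by (apply Hgcs, Hin). eapply entails_of_consistent_ground; eauto. }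
  set (T' := ground_tree G T).
  exists (mkGarg (leaf_atoms T') (annots T') (asubstf G (ca_claim al0))). split.
  - exists T'. split; [|split; [|split; reflexivity]].
    + unfold T'. rewrite ground_tree_root, Hroot. reflexivity.
    + apply ground_tree_local; assumption.
  - split; simpl.
    + apply set_equiv_of_same_elements. intros a. unfold T'. rewrite ground_tree_leaves. split.
      * intros Ha. apply in_map_iff in Ha as [a1 [<- Ha1]]. apply in_map_iff in Ha1 as [b [<- Hb]].
        apply Has in Hb as [Hb HA]. exists b. repeat split; auto.
        -- apply assumption_not_constraint, HA.
        -- rewrite HGs; [reflexivity|]. apply Hgas, in_map, in_map, Has. auto.
      * intros [b [Hb [HnC ->]]].
        assert (Hb' : In b (ca_as al0)) by (apply Has; rewrite tight_leaf_assumption; eauto).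
        rewrite HGs by (apply Hgas, in_map, in_map, Hb'). apply in_map, in_map, Hb'.
    + rewrite HGs by exact Hgclaim. apply atom_equiv_refl.
Qed.

(** * Arguments of Ground(F_c) are ground constrained instances *)

Fixpoint path_code (q : list nat) : nat :=
  match q with
  | [] => 0
  | i :: q' => S (Cantor.to_nat (i, path_code q'))
  end.

Lemma path_code_inj q q' : path_code q = path_code q' -> q = q'.
Proof.
  revert q'; induction q as [| i q IH]; intros [| i' q'] H; cbn [path_code] in H;
    try discriminate; [reflexivity|].
  apply Nat.succ_inj, Cantor.to_nat_inj in H. injection H as -> H. f_equal. auto.
Qed.

Definition path_renaming (q : list nat) (y : nat) : nat := Cantor.to_nat (path_code q, y).

Lemma path_renaming_inj q q' y y' :
  path_renaming q y = path_renaming q' y' -> q = q' /\ y = y'.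
Proof.
  unfold path_renaming. intros H. apply Cantor.to_nat_inj in H.
  injection H as H ->. split; [apply path_code_inj, H | reflexivity].
Qed.

Lemma path_renaming_injective q : Injective (path_renaming q).
Proof. intros y y' H. apply path_renaming_inj in H. tauto. Qed.

Lemma ground_argument_claim g c :
  (forall s, In s (subtrees g) -> ground_local F s) -> root g = Some c -> ~ Cp F (fst c) ->
  ground_atom c /\ Lp F (fst c).
Proof.
  intros Hg Hroot HnC. specialize (Hg g (in_subtrees_self g)).
  destruct g as [| a | a rg kids]; simpl in Hroot, Hg; [discriminate | |];
    injection Hroot as ->.
  - split; [tauto | apply assumption_in_language; tauto].
  - destruct Hg as [[[r [sg [Hr [_ [-> Hgr]]]]] | [c' [HC [_ [_ ->]]]]] [<- _]].
    + split.
      * apply app_eq_nil in Hgr. tauto.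
      * apply (rule_head_in_language _ Hr).
    + contradiction.
Qed.

Definition source_rule (rg : rule Fsym Psym) : rule Fsym Psym * subst Fsym :=
  epsilon (inhabits (rg, [])) (fun rs => Rl F (fst rs) /\ rg = rsubst (snd rs) (fst rs)).

Lemma source_rule_spec rg r sg :
  Rl F r -> rg = rsubst sg r ->
  Rl F (fst (source_rule rg)) /\ rg = rsubst (snd (source_rule rg)) (fst (source_rule rg)).
Proof.
  intros Hr Hrg. apply (epsilon_spec (inhabits (rg, []))
                          (fun rs => Rl F (fst rs) /\ rg = rsubst (snd rs) (fst rs))).
  exists (r, sg). auto.
Qed.

(* The node at path [q] uses the copy of its source rule renamed by [path_renaming q],
   which keeps the copies at different nodes apart. *)
Fixpoint tight_tree (q : list nat) (lbl : atom Fsym Psym) (g : tree Fsym Psym (rule Fsym Psym))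
  {struct g} : tree Fsym Psym (tnode Fsym Psym) :=
  match g with
  | TTrue => TTrue
  | TLeaf _ => TLeaf lbl
  | TNode a rg kids =>
      if excluded_middle_informative (Cp F (fst a)) then TLeaf lbl else
      let r := fst (source_rule rg) in
      TNode lbl (r, path_renaming q)
        (imap2 (fun i l k => tight_tree (q ++ [i]) l k) lbl 0
           (body (node_rule lbl r (path_renaming q))) kids)
  end.

Fixpoint rule_nodes (q : list nat) (g : tree Fsym Psym (rule Fsym Psym)) {struct g} :
  list (list nat * (rule Fsym Psym * subst Fsym)) :=
  match g with
  | TNode a rg kids =>
      if excluded_middle_informative (Cp F (fst a)) then [] else
      (q, source_rule rg) :: concat (imap (fun i k => rule_nodes (q ++ [i]) k) 0 kids)
  | _ => []
  end.

Lemma tight_tree_root q lbl g : root (tight_tree q lbl g) = option_map (fun _ => lbl) (root g).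
Proof.
  destruct g as [| a | a rg kids]; simpl; auto.
  destruct (excluded_middle_informative (Cp F (fst a))); reflexivity.
Qed.

Lemma annots_tight_tree g : forall q lbl,
  annots (tight_tree q lbl g) =
  map (fun n => (fst (snd n), path_renaming (fst n))) (rule_nodes q g).
Proof.
  induction g as [| a | a rg kids IH] using tree_nested_ind; intros q lbl; try reflexivity.
  simpl. destruct (excluded_middle_informative (Cp F (fst a))); [reflexivity|].
  rewrite annots_node. simpl. f_equal.
  assert (Hkids : forall j la,
    flat_map (@annots _ _ _) (imap2 (fun i l k => tight_tree (q ++ [i]) l k) lbl j la kids) =
    map (fun n => (fst (snd n), path_renaming (fst n)))
        (concat (imap (fun i k => rule_nodes (q ++ [i]) k) j kids))).
  { induction IH as [| k ks Hk _ IHks]; intros j la; simpl; [reflexivity|].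
    rewrite map_app, Hk, IHks. reflexivity. }
  apply Hkids.
Qed.

Lemma rule_nodes_paths g : forall q,
  NoDup (map fst (rule_nodes q g)) /\
  (forall q', In q' (map fst (rule_nodes q g)) -> exists u, q' = q ++ u).
Proof.
  induction g as [| a | a rg kids IH] using tree_nested_ind; intros q;
    try (split; [constructor | contradiction]).
  simpl. destruct (excluded_middle_informative (Cp F (fst a)));
    [split; [constructor | contradiction]|].
  assert (Hkids : forall j,
    NoDup (map fst (concat (imap (fun i k => rule_nodes (q ++ [i]) k) j kids))) /\
    forall q', In q' (map fst (concat (imap (fun i k => rule_nodes (q ++ [i]) k) j kids))) ->
      exists i u, j <= i /\ q' = q ++ i :: u).
  { induction IH as [| k ks Hk _ IHks]; intros j; simpl; [split; [constructor | contradiction]|].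
    destruct (Hk (q ++ [j])) as [Hnd Hpath]. destruct (IHks (S j)) as [Hnd' Hpath'].
    rewrite map_app. split.
    - apply NoDup_app; auto. intros q' Hq Hq'.
      destruct (Hpath q' Hq) as [u ->]. destruct (Hpath' _ Hq') as [i [u' [Hi E]]].
      rewrite <- app_assoc in E. apply app_inv_head in E. injection E as ->. lia.
    - intros q' Hq. apply in_app_iff in Hq as [Hq | Hq].
      + destruct (Hpath q' Hq) as [u ->]. exists j, u. rewrite <- app_assoc. auto.
      + destruct (Hpath' q' Hq) as [i [u [Hi ->]]]. exists i, u. split; [lia | reflexivity]. }
  destruct (Hkids 0) as [Hnd Hpath]. split.
  - constructor; [|exact Hnd]. intros Hq. destruct (Hpath q Hq) as [i [u [_ E]]].
    rewrite <- (app_nil_r q) in E at 1. apply app_inv_head in E. discriminate.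
  - intros q' [<- | Hq]; [exists []; apply eq_sym, app_nil_r|].
    destruct (Hpath q' Hq) as [i [u [_ ->]]]. eauto.
Qed.

Definition nodes_subst (L : list (list nat * (rule Fsym Psym * subst Fsym))) : subst Fsym :=
  flat_map (fun n => map (fun y => (path_renaming (fst n) y, lookup (snd (snd n)) y))
                         (nodup Nat.eq_dec (vars_rule (fst (snd n))))) L.

Lemma is_subst_nodes_subst L : NoDup (map fst L) -> is_subst (nodes_subst L).
Proof.
  unfold is_subst. induction L as [| n L IH]; simpl; intros Hnd; [constructor|].
  inversion Hnd as [| ? ? Hn HndL]. rewrite map_app, map_map. simpl. apply NoDup_app.
  - apply Injective_map_NoDup; [apply path_renaming_injective | apply NoDup_nodup].
  - apply IH, HndL.
  - intros k Hk Hk'. apply in_map_iff in Hk as [y [<- _]].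
    apply in_map_iff in Hk' as [[k v] [Ek Hk']]. simpl in Ek. subst k.
    apply in_flat_map in Hk' as [m [Hm Hm']]. apply in_map_iff in Hm' as [z [Ez _]].
    injection Ez as Ez _. apply path_renaming_inj in Ez as [Ez _].
    apply Hn. rewrite <- Ez. apply in_map, Hm.
Qed.

Definition subst_agrees (th : subst Fsym) (L : list (list nat * (rule Fsym Psym * subst Fsym))) :=
  forall q rs, In (q, rs) L ->
  forall y, In y (vars_rule (fst rs)) -> lookup th (path_renaming q y) = lookup (snd rs) y.

Lemma nodes_subst_agrees L : NoDup (map fst L) -> subst_agrees (nodes_subst L) L.
Proof.
  intros Hnd q rs Hq y Hy. apply lookup_In; [apply is_subst_nodes_subst, Hnd|].
  apply in_flat_map. exists (q, rs). split; [exact Hq|].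
  apply in_map_iff. exists y. split; [reflexivity | apply nodup_In, Hy].
Qed.

Lemma subst_agrees_app th L1 L2 :
  subst_agrees th (L1 ++ L2) -> subst_agrees th L1 /\ subst_agrees th L2.
Proof. intros H. split; intros q rs Hq; apply H, in_or_app; auto. Qed.

Definition leaves_correspond (th : subst Fsym) (Ls Lg : list (atom Fsym Psym)) : Prop :=
  (forall b, In b Ls ->
     (Ap F (fst b) /\ In (asubst th b) Lg) \/
     (Cp F (fst b) /\ entails F (asubst th b) /\ ground_atom (asubst th b))) /\
  (forall a, In a Lg -> exists b, In b Ls /\ Ap F (fst b) /\ asubst th b = a).

Lemma leaves_correspond_nil th : leaves_correspond th [] [].
Proof. split; intros ? []. Qed.

Lemma leaves_correspond_app th L1 L2 G1 G2 :
  leaves_correspond th L1 G1 -> leaves_correspond th L2 G2 ->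
  leaves_correspond th (L1 ++ L2) (G1 ++ G2).
Proof.
  intros [F1 B1] [F2 B2]. split.
  - intros b Hb. apply in_app_iff in Hb as [Hb | Hb];
      [destruct (F1 b Hb) as [[HA Hin] | H] | destruct (F2 b Hb) as [[HA Hin] | H]];
      auto; left; split; auto; apply in_or_app; auto.
  - intros a Ha. apply in_app_iff in Ha as [Ha | Ha];
      [destruct (B1 a Ha) as [b [Hb H]] | destruct (B2 a Ha) as [b [Hb H]]];
      exists b; split; auto; apply in_or_app; auto.
Qed.

Definition tight_tree_hyp th q lbl g : Prop :=
  (forall s, In s (subtrees g) -> ground_local F s) /\
  (forall a, root g = Some a -> asubst th lbl = a) /\
  subst_agrees th (rule_nodes q g).

Definition tight_tree_spec th q lbl g : Prop :=
  (forall s, In s (subtrees (tight_tree q lbl g)) -> tight_local F s) /\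
  leaves_correspond th (leaf_atoms (tight_tree q lbl g)) (leaf_atoms g).

Local Notation tight_kids q lbl j labels kids :=
  (imap2 (fun i l k => tight_tree (q ++ [i]) l k) lbl j labels kids).

Lemma tight_tree_kids th q lbl kids :
  Forall (fun k => forall q lbl, tight_tree_hyp th q lbl k -> tight_tree_spec th q lbl k) kids ->
  forall j labels,
  (forall k, In k kids -> forall s, In s (subtrees k) -> ground_local F s) ->
  map (@root _ _ _) kids = map Some (map (asubst th) labels) ->
  subst_agrees th (concat (imap (fun i k => rule_nodes (q ++ [i]) k) j kids)) ->
  map (@root _ _ _) (tight_kids q lbl j labels kids) = map Some labels /\
  (forall k', In k' (tight_kids q lbl j labels kids) ->
     forall s, In s (subtrees k') -> tight_local F s) /\
  leaves_correspond th (flat_map (@leaf_atoms _ _ _) (tight_kids q lbl j labels kids))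
                       (flat_map (@leaf_atoms _ _ _) kids).
Proof.
  induction 1 as [| k ks Hk _ IHks]; intros j labels Hg Hroots Hth; simpl.
  - destruct labels; [|discriminate].
    split; [reflexivity | split; [contradiction | apply leaves_correspond_nil]].
  - destruct labels as [| l ls]; [discriminate|]. simpl in Hroots |- *.
    injection Hroots as Hrk Hroots.
    destruct (subst_agrees_app _ _ Hth) as [Hthk Hthks].
    destruct (Hk (q ++ [j]) l) as [Htk Hlk].
    { split; [apply Hg; left; reflexivity|]. split; [|exact Hthk].
      intros a Ha. congruence. }
    destruct (IHks (S j) ls) as [Rroots [Rt Rleaves]]; auto.
    { intros k' Hk'. apply Hg. right. exact Hk'. }
    split; [|split].
    + rewrite tight_tree_root, Hrk, Rroots. reflexivity.
    + intros k' [<- | Hk']; [exact Htk | exact (Rt k' Hk')].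
    + apply leaves_correspond_app; auto.
Qed.

Lemma source_rule_at_node th q lbl a rg kids :
  ~ Cp F (fst a) -> ground_local F (TNode a rg kids) -> asubst th lbl = a ->
  subst_agrees th [(q, source_rule rg)] ->
  let r := fst (source_rule rg) in
  Rl F r /\ fst (Defs.head r) = fst lbl /\ length (snd (Defs.head r)) = length (snd lbl) /\
  map (asubst th) (body (node_rule lbl r (path_renaming q))) = body rg.
Proof.
  intros HnC [Hrg [Hhd _]] Hla Hth.
  destruct Hrg as [[r0 [sg0 [Hr0 [_ [Erg0 _]]]]] | [c [HC [_ [_ ->]]]]];
    [| simpl in Hhd; subst; contradiction].
  destruct (source_rule_spec Hr0 Erg0) as [Hr Erg].
  destruct (source_rule rg) as [r sg]. simpl in *.
  destruct (rule_head_vars _ Hr) as [ys [Hys Hnd]].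
  assert (Hhead : asubstf (lookup th) lbl = asubstf (lookup sg) (Defs.head r)).
  { change (asubst th lbl = Defs.head (rsubst sg r)). rewrite <- Erg, Hhd. exact Hla. }
  pose proof (@node_rule_instance _ _ lbl r (path_renaming q) ys (lookup th) (lookup sg)
                Hys Hnd (path_renaming_injective q) Hhead
                (fun y Hy => Hth q (r, sg) (or_introl eq_refl) y Hy)) as Hinst.
  repeat split.
  - exact Hr.
  - apply (f_equal fst) in Hhead. exact (eq_sym Hhead).
  - apply (f_equal (fun h => length (snd h))) in Hhead. simpl in Hhead.
    rewrite !length_map in Hhead. exact (eq_sym Hhead).
  - apply (f_equal (@body _ _)) in Hinst. rewrite Erg. exact Hinst.
Qed.

Lemma tight_tree_node_spec th q lbl a rg r kids :
  Forall (fun k => forall q lbl, tight_tree_hyp th q lbl k -> tight_tree_spec th q lbl k) kids ->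
  (forall k, In k kids -> forall s, In s (subtrees k) -> ground_local F s) ->
  kids_match (body rg) kids ->
  subst_agrees th (concat (imap (fun i k => rule_nodes (q ++ [i]) k) 0 kids)) ->
  Rl F r -> fst (Defs.head r) = fst lbl -> length (snd (Defs.head r)) = length (snd lbl) ->
  map (asubst th) (body (node_rule lbl r (path_renaming q))) = body rg ->
  (forall s, In s (subtrees (TNode lbl (r, path_renaming q)
       (tight_kids q lbl 0 (body (node_rule lbl r (path_renaming q))) kids))) ->
     tight_local F s) /\
  leaves_correspond th
    (flat_map (@leaf_atoms _ _ _)
       (tight_kids q lbl 0 (body (node_rule lbl r (path_renaming q))) kids))
    (flat_map (@leaf_atoms _ _ _) kids).
Proof.
  intros IH Hg Hkm Hth Hr Hfst Hlen Hbody.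
  rewrite subtrees_node_forall, tight_local_node.
  remember (body (node_rule lbl r (path_renaming q))) as labels eqn:El.
  rewrite <- Hbody in Hkm. destruct labels as [| l ls].
  - simpl in Hkm. subst kids. simpl.
    split; [|apply leaves_correspond_nil].
    split; [repeat split; auto; apply path_renaming_injective|].
    intros k' [<- | []] s [<- | []]. exact I.
  - destruct (@tight_tree_kids th q lbl kids IH 0 (l :: ls) Hg Hkm Hth) as [Hroots [Ht Hleaves]].
    split; [|exact Hleaves]. split; [|exact Ht].
    repeat split; auto. apply path_renaming_injective.
Qed.

Lemma tight_tree_correct th g : forall q lbl,
  tight_tree_hyp th q lbl g -> tight_tree_spec th q lbl g.
Proof.
  induction g as [| a | a rg kids IH] using tree_nested_ind; intros q lbl [Hg [Hroot Hth]].
  - split; [intros s [<- | []]; exact I | apply leaves_correspond_nil].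
  - assert (Hla : asubst th lbl = a) by (apply Hroot; reflexivity).
    assert (Hfst : fst lbl = fst a) by (rewrite <- Hla; reflexivity).
    destruct (Hg _ (in_subtrees_self _)) as [HA _]. rewrite <- Hfst in HA.
    split; [|split].
    + intros s [<- | []]. right. exact HA.
    + intros b [<- | []]. left. rewrite Hla. split; [exact HA | left; reflexivity].
    + intros a' [<- | []]. exists lbl. split; [left; reflexivity | auto].
  - assert (Hla : asubst th lbl = a) by (apply Hroot; reflexivity).
    pose proof (Hg _ (in_subtrees_self _)) as Hnode.
    apply subtrees_node_forall in Hg as [_ Hgkids].
    unfold tight_tree_spec. cbn [tight_tree rule_nodes] in Hth |- *.
    destruct (excluded_middle_informative (Cp F (fst a))) as [HC | HC].
    + destruct Hnode as [[[r [sg [Hr [_ [-> _]]]]] | [c [_ [Hgc [Hent ->]]]]] [Hhd Hkm]].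
      { exfalso. apply (rule_head_not_constraint _ Hr). rewrite <- Hhd in HC. exact HC. }
      simpl in Hhd, Hkm. subst c kids.
      assert (Hfst : fst lbl = fst a) by (rewrite <- Hla; reflexivity). rewrite <- Hfst in HC.
      split; [intros s [<- | []]; left; exact HC|].
      rewrite leaf_atoms_node. split; [|intros ? []].
      intros b [<- | []]. right. rewrite Hla. auto.
    + destruct (subst_agrees_app [_] _ Hth) as [Hthr Hthkids].
      destruct (@source_rule_at_node th q lbl a rg kids HC Hnode Hla Hthr)
        as [Hr [Hfst [Hlen Hbody]]].
      rewrite !leaf_atoms_node.
      apply tight_tree_node_spec with (rg := rg); try assumption. apply Hnode.
Qed.

Definition atoms_with (P : Psym -> Prop) (l : list (atom Fsym Psym)) : list (atom Fsym Psym) :=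
  filter (fun b => if excluded_middle_informative (P (fst b)) then true else false) l.

Lemma in_atoms_with P l b : In b (atoms_with P l) <-> In b l /\ P (fst b).
Proof.
  unfold atoms_with. rewrite filter_In.
  destruct (excluded_middle_informative (P (fst b))); intuition discriminate.
Qed.

Lemma leaves_correspond_constraints th Ls Lg b :
  leaves_correspond th Ls Lg -> In b (atoms_with (Cp F) Ls) ->
  entails F (asubst th b) /\ ground_atom (asubst th b).
Proof.
  intros [Hfwd _] Hb. apply in_atoms_with in Hb as [Hb HC].
  destruct (Hfwd b Hb) as [[HA _] | H]; [|tauto].
  exfalso. exact (assumption_not_constraint _ HA HC).
Qed.

Lemma leaves_correspond_assumptions th Ls Lg a :
  leaves_correspond th Ls Lg -> In a (map (asubst th) (atoms_with (Ap F) Ls)) <-> In a Lg.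
Proof.
  intros [Hfwd Hback]. split.
  - intros Ha. apply in_map_iff in Ha as [b [<- Hb]]. apply in_atoms_with in Hb as [Hb HA].
    destruct (Hfwd b Hb) as [[_ H] | [HC _]]; [exact H|].
    exfalso. exact (assumption_not_constraint _ HA HC).
  - intros Ha. destruct (Hback a Ha) as [b [Hb [HA <-]]]. apply in_map, in_atoms_with. auto.
Qed.

Definition tree_carg (T : tree Fsym Psym (tnode Fsym Psym)) c : carg Fsym Psym :=
  mkCarg (atoms_with (Cp F) (leaf_atoms T)) (atoms_with (Ap F) (leaf_atoms T))
         (map fst (annots T)) c.

Lemma renamed_apart_of_paths (T : tree Fsym Psym (tnode Fsym Psym)) s
  (L : list (list nat * (rule Fsym Psym * subst Fsym))) :
  annots T = map (fun n => (fst (snd n), path_renaming (fst n))) L -> NoDup (map fst L) ->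
  ground_atom s -> renamed_apart T s.
Proof.
  intros HT Hnd Hs. unfold renamed_apart. rewrite HT, map_map. split.
  - apply ForallOrdPairs_map_keyed with (key := fst); [exact Hnd|].
    intros n n' _ _ Hne x Hx Hx'. simpl in Hx, Hx'.
    apply vars_rename_rule in Hx as [y ->]. apply vars_rename_rule in Hx' as [y' E].
    apply path_renaming_inj in E. tauto.
  - intros r x _ _. unfold ground_atom in Hs. rewrite Hs. auto.
Qed.

Lemma is_tight_of_tree T c :
  root T = Some c -> Lp F (fst c) -> ~ Cp F (fst c) ->
  (forall s, In s (subtrees T) -> tight_local F s) -> renamed_apart T c ->
  consistent F (atoms_with (Cp F) (leaf_atoms T)) -> is_tight F T (tree_carg T c).
Proof.
  intros Hroot HL HnC Ht Hra Hcons.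
  do 5 (split; [assumption|]). split; [intros; apply in_atoms_with|].
  split; [intros; apply in_atoms_with|]. split; [|exact Hcons].
  intros r. simpl. rewrite in_map_iff. split.
  - intros [[r' rho] [<- Hr]]. eauto.
  - intros [rho Hr]. exists (r, rho). auto.
Qed.

Definition carg_instance (th : subst Fsym) (al : carg Fsym Psym) : carg Fsym Psym :=
  mkCarg (map (asubst th) (ca_cs al)) (map (asubst th) (ca_as al)) (ca_rs al)
         (asubst th (ca_claim al)).

Lemma cinstance_carg_instance th al :
  is_subst th -> consistent F (map (asubst th) (ca_cs al)) -> cinstance F al (carg_instance th al).
Proof.
  intros Hth Hcons. exists th, []. rewrite app_nil_r.
  repeat split; [exact Hth | contradiction | exact Hcons].
Qed.

Lemma cinstance_refl al : consistent F (ca_cs al) -> cinstance F al al.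
Proof.
  intros Hcons. assert (Hid : forall l : list (atom Fsym Psym), map (asubst []) l = l).
  { intros l. rewrite <- (map_id l) at 2. apply map_ext, asubstf_Var. }
  exists [], []. rewrite app_nil_r, !Hid. repeat split.
  - constructor.
  - contradiction.
  - exact Hcons.
  - destruct al. simpl. f_equal. symmetry. apply asubstf_Var.
Qed.

Lemma ground_carg_instance_in_GrCInst th al :
  tight_carg F al -> is_subst th -> consistent F (map (asubst th) (ca_cs al)) ->
  ground_carg (carg_instance th al) -> GrCInst_CArg F (carg_instance th al).
Proof.
  intros Hal Hth Hcons Hground. exists (carg_instance th al). split; [|split; [|exact Hground]].
  - exists al. split; [exact Hal | apply cinstance_carg_instance; assumption].
  - apply cinstance_refl, Hcons.
Qed.

Lemma argument_is_ground_instance ga :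
  Arg_c F ga -> ~ Cp F (fst (ga_claim ga)) ->
  exists be, GrCInst_CArg F be /\ eq_mod_gc F be ga.
Proof.
  intros [g [Hroot [Hgl [Has _]]]] HnC.
  set (c := ga_claim ga) in *.
  destruct (ground_argument_claim g Hgl Hroot HnC) as [Hgc HLc].
  destruct (rule_nodes_paths g []) as [Hnd _].
  set (th := nodes_subst (rule_nodes [] g)).
  set (T := tight_tree [] c g).
  assert (Hspec : tight_tree_spec th [] c g).
  { apply tight_tree_correct. split; [exact Hgl | split; [|apply nodes_subst_agrees, Hnd]].
    intros a Ha. rewrite Hroot in Ha. injection Ha as <-. apply asubstf_ground, Hgc. }
  destruct Hspec as [Ht Hleaves]. fold T in Ht, Hleaves.
  pose proof (fun b => leaves_correspond_constraints b Hleaves) as Hcs.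
  pose proof (fun a => leaves_correspond_assumptions a Hleaves) as Has'.
  assert (Hclaim : asubst th c = c) by (apply asubstf_ground, Hgc).
  exists (carg_instance th (tree_carg T c)). split.
  - apply ground_carg_instance_in_GrCInst.
    + exists T. apply is_tight_of_tree; auto.
      * unfold T. rewrite tight_tree_root, Hroot. reflexivity.
      * apply renamed_apart_of_paths with (rule_nodes [] g); auto. apply annots_tight_tree.
      * apply consistent_of_entailed_instances with (lookup th). apply Hcs.
    + apply is_subst_nodes_subst, Hnd.
    + apply consistent_of_entailed_instances with (@Var _).
      intros b Hb. apply in_map_iff in Hb as [b' [<- Hb']]. rewrite asubstf_Var. apply Hcs, Hb'.
    + split; [|split]; simpl.
      * intros b Hb. apply in_map_iff in Hb as [b' [<- Hb']]. apply Hcs, Hb'.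
      * intros a Ha. apply Has', leaf_in_subtrees, Hgl in Ha. exact (proj2 Ha).
      * rewrite Hclaim. exact Hgc.
  - split; simpl; [|rewrite Hclaim; apply atom_equiv_refl].
    apply set_equiv_of_same_elements. intros a. rewrite Has', Has. reflexivity.
Qed.

End CABA.

Theorem theorem5p12 (Fsym Psym : Type) (F : caba Fsym Psym) :
  wf_caba F ->
  (exists t : term Fsym, ground_term t) ->
  (forall be, GrCInst_CArg F be ->
     exists ga, Arg_c F ga /\ eq_mod_gc F be ga) /\
  (forall ga, Arg_c F ga -> ~ Cp F (fst (ga_claim ga)) ->
     exists be, GrCInst_CArg F be /\ eq_mod_gc F be ga).
Proof.
  intros wf Hground. split.
  - apply ground_instance_is_argument; assumption.
  - apply argument_is_ground_instance, wf.
Qed.
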